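(* For the anonymous MIS algorithm described in the context, let $\mathcal{X}$ be an alive connected candidate set of a configuration $\gamma$, and let $t$ be a valid set of moves in $\gamma$ consisting only of Withdrawal? moves on nodes of $\mathcal{X}$. Let $\gamma'$ be the random configuration obtained by executing $t$ from $\gamma$. Then, conditioned on the event that $\mathcal{X}$ vanishes in the transition $\gamma\xrightarrow{t}\gamma'$ (assumed to have positive probability), the probability that $\beta(\gamma')\setminus\beta(\gamma)\neq\emptyset$ is at least $\frac23$.
   Context: $G=(V,E)$ is a finite simple undirected graph; $N(u)$ is the open neighbourhood of $u$. A configuration assigns to each node $u$ a value $s_u\in\{\bot,\top\}$ (written $s_u^\gamma$ in configuration $\gamma$). A rule ''guard $\to$ command'' is enabled on $u$ in $\gamma$ if its guard holds there. A set $t$ of moves $(u,r)$ is valid in $\gamma$ if it is nonempty, each $r$ is enabled on $u$ in $\gamma$, and no node appears in two moves; executing $t$ from $\gamma$ means all nodes of $t$ execute their commands simultaneously from the values in $\gamma$, with independent random choices, the other nodes keeping their values. The algorithm has the rules: (Candidacy) $s_u=\bot\wedge\forall v\in N(u),\ s_v=\bot\ \to\ s_u:=\top$. (Withdrawal?) $s_u=\top\wedge\exists v\in N(u),\ s_v=\top\ \to$ with probability $\frac12$ (independently) set $s_u:=\bot$, otherwise leave it unchanged. $\beta(\gamma)=\{u\in V: s_u^\gamma=\top\text{ and }\forall v\in N(u),\ s_v^\gamma=\bot\}$. A set $\mathcal{X}\subseteq V$ is a candidate set of $\gamma$ if every $u\in\mathcal{X}$ has $s_u^\gamma=\top$ and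 every $v\in N(u)$ with $s_v^\gamma=\top$ belongs to $\mathcal{X}$; it is a connected candidate set if moreover it induces a connected subgraph of $G$. A candidate set $\mathcal{X}$ of $\gamma$ is alive in $\gamma$ if Withdrawal? is enabled on at least one node of $\mathcal{X}$ (for connected candidate sets this is equivalent to $|\mathcal{X}|\ge 2$). In a transition $\gamma\to\gamma'$, an alive candidate set $\mathcal{X}$ of $\gamma$ vanishes if every $u\in\mathcal{X}$ satisfies $s_u^{\gamma'}=\bot$ or $u\in\beta(\gamma')$. *)

From HB Require Import structures.
From mathcomp Require Import all_boot all_order all_algebra.
Set Implicit Arguments. Unset Strict Implicit. Unset Printing Implicit Defensive.
Import Order.TTheory GRing.Theory Num.Theory.

(* A graph: T : finType with a symmetric irreflexive adjacency relation e.
   A configuration is s : T -> bool, with true = top, false = bot. *)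

Definition simple_graph (T : finType) (e : rel T) : Prop :=
  symmetric e /\ irreflexive e.

Inductive rule := Candidacy | Withdrawal.
Definition rule_to_bool (r : rule) : bool :=
  match r with Candidacy => true | Withdrawal => false end.
Definition bool_to_rule (b : bool) : rule := if b then Candidacy else Withdrawal.
Lemma rule_to_boolK : cancel rule_to_bool bool_to_rule. Proof. by case. Qed.
HB.instance Definition _ := Finite.copy rule (can_type rule_to_boolK).

Section Alg.
Variables (T : finType) (e : rel T).

Definition enabled (s : T -> bool) (u : T) (r : rule) : bool :=
  match r with
  | Candidacy => ~~ s u && [forall v, e u v ==> ~~ s v]
  | Withdrawal => s u && [exists v, e u v && s v]
  end.

Definition valid_moves (s : T -> bool) (t : {set T * rule}) : bool :=
  [&& t != set0,
      [forall m in t, enabled s m.1 m.2] &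
      [forall m1 in t, forall m2 in t, (m1.1 == m2.1) ==> (m1 == m2)]].

Definition withdrawing_nodes (t : {set T * rule}) : {set T} :=
  [set u | (u, Withdrawal) \in t].

(* Result of executing t from s when the set of withdrawing nodes that
   actually switch to bot (random choice) is W. *)
Definition exec (s : T -> bool) (t : {set T * rule}) (W : {set T}) : T -> bool :=
  fun u => if (u, Candidacy) \in t then true
           else if (u, Withdrawal) \in t then ~~ (u \in W) && s u
           else s u.

Definition beta (s : T -> bool) : {set T} :=
  [set u | s u && [forall v, e u v ==> ~~ s v]].

Definition candidate_set (s : T -> bool) (X : {set T}) : bool :=
  [forall u in X, s u && [forall v, (e u v && s v) ==> (v \in X)]].

Definition induced_connected (X : {set T}) : bool :=
  [forall u in X, forall v in X,
     connect (fun a b => [&& e a b, a \in X & b \in X]) u v].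

Definition connected_candidate_set (s : T -> bool) (X : {set T}) : bool :=
  candidate_set s X && induced_connected X.

Definition alive (s : T -> bool) (X : {set T}) : bool :=
  [exists u in X, enabled s u Withdrawal].

Definition vanishes (s' : T -> bool) (X : {set T}) : bool :=
  [forall u in X, ~~ s' u || (u \in beta s')].

(* Probability of an event E (on the final configuration) when executing t
   from s: each withdrawing node independently switches to bot w.p. 1/2. *)
Definition exec_prob (s : T -> bool) (t : {set T * rule})
    (E : (T -> bool) -> bool) : rat :=
  let Tw := withdrawing_nodes t in
  (\sum_(W : {set T} | (W \subset Tw) && E (exec s t W))
     (1/2 : rat) ^+ #|W| * (1/2 : rat) ^+ #|Tw :\: W|)%R.

End Alg.

(* Every withdrawal move is on a node of the candidate set X, so an outcome
   is a set W of nodes of X switched to bot, all outcomes being equally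
   likely.  Since X is connected and alive, every node of X has a top
   neighbour in gamma, so any node of X surviving a vanishing outcome is a new
   element of beta: every vanishing outcome except W = X is favourable.  The
   outcome W = X is possible only when all of X withdraws, and then the two
   outcomes X \ {u} and X \ {v}, for adjacent u, v in X, vanish with u resp. v
   surviving, so at least two thirds of the vanishing outcomes are
   favourable. *)
From mathcomp Require Import all_boot all_order all_algebra.
Import Order.TTheory GRing.Theory Num.Theory.
From mathcomp Require Import lra zify.
Set Implicit Arguments. Unset Strict Implicit. Unset Printing Implicit Defensive.
Local Open Scope ring_scope.

Definition outcomes (T : finType) (s : T -> bool) (t : {set T * rule})
    (E : (T -> bool) -> bool) : {set {set T}} :=
  [set W : {set T} | (W \subset withdrawing_nodes t) && E (exec s t W)].

Section Probability.
Variables (T : finType) (s : T -> bool) (t : {set T * rule}).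

Lemma exec_probE (E : (T -> bool) -> bool) :
  exec_prob s t E = (1/2 : rat) ^+ #|withdrawing_nodes t| *+ #|outcomes s t E|.
Proof.
rewrite /exec_prob -sumr_const.
rewrite (eq_bigl (fun W => W \in outcomes s t E)) => [|W]; last by rewrite inE.
apply: eq_bigr => W; rewrite inE => /andP[sub _].
by rewrite -exprD cardsDS // subnKC // subset_leq_card.
Qed.

Lemma exec_prob_gt0 (E : (T -> bool) -> bool) :
  (0 < exec_prob s t E) = (0 < #|outcomes s t E|)%N.
Proof. by rewrite exec_probE mulrn_wgt0 // exprn_gt0. Qed.

Lemma exec_prob_ratioE (E F : (T -> bool) -> bool) :
  exec_prob s t F / exec_prob s t E =
    #|outcomes s t F|%:R / #|outcomes s t E|%:R.
Proof.
rewrite !exec_probE; set c := _ ^+ _.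
rewrite -[c *+ _]mulr_natr -[c *+ #|outcomes s t E|]mulr_natr.
by rewrite invfM mulrACA divff ?mul1r // expf_neq0.
Qed.

Lemma exec_withdrawal (W : {set T}) :
  (forall u, (u, Candidacy) \notin t) -> W \subset withdrawing_nodes t ->
  forall u, exec s t W u = (u \notin W) && s u.
Proof.
move=> noCand sub u; rewrite /exec (negbTE (noCand u)).
case: ifPn => // uw; suff -> : u \notin W by [].
by apply: contraNN uw => /(subsetP sub); rewrite inE.
Qed.

End Probability.

Section CandidateSet.
Variables (T : finType) (e : rel T) (s : T -> bool) (X : {set T}).
Hypothesis candX : candidate_set e s X.

Lemma candidate_set_top x : x \in X -> s x.
Proof. by move=> xX; move/forall_inP: candX => /(_ x xX) /andP[]. Qed.

Lemma candidate_set_closed x y : x \in X -> e x y -> s y -> y \in X.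
Proof.
move=> xX exy sy; move/forall_inP: candX => /(_ x xX) /andP[_ /forallP].
by move/(_ y); rewrite exy sy.
Qed.

Lemma alive_connected_notin_beta x :
  induced_connected e X -> alive e s X -> x \in X -> x \notin beta e s.
Proof.
move=> conX /exists_inP[u uX /andP[_ /existsP[v /andP[euv sv]]]] xX.
suff [y exy sy] : exists2 y, e x y & s y.
  by rewrite inE negb_and; apply/orP; right; apply/forallPn; exists y; rewrite exy sy.
have [-> | xu] := eqVneq x u; first by exists v.
move/forall_inP: conX => /(_ x xX) /forall_inP /(_ u uX) /connectP[[|y p]] /=.
  by move=> _ ux; rewrite ux eqxx in xu.
by case/andP=> /and3P[exy _ yX] _ _; exists y; rewrite ?candidate_set_top.
Qed.

Lemma survivor_in_new_beta (W : {set T}) (s' : T -> bool) x :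
  (forall u, s' u = (u \notin W) && s u) ->
  induced_connected e X -> alive e s X -> vanishes e s' X ->
  x \in X -> x \notin W -> x \in beta e s' :\: beta e s.
Proof.
move=> hs' conX aliveX /forall_inP van xX xW.
rewrite inE alive_connected_notin_beta //=.
by have := van x xX; rewrite hs' xW candidate_set_top.
Qed.

Lemma lone_survivor_vanishes (s' : T -> bool) x :
  irreflexive e -> (forall u, s' u = (u \notin X :\ x) && s u) ->
  x \in X -> vanishes e s' X.
Proof.
move=> eirr hs' xX; apply/forall_inP => y yX.
rewrite hs' !inE yX andbT; have [-> | //] := eqVneq y x.
rewrite candidate_set_top //= hs' !inE eqxx candidate_set_top //=.
apply/forallP => z; apply/implyP => exz; rewrite hs' !inE negb_and negbK.
have [zx | _ /=] := eqVneq z x; first by rewrite zx eirr in exz.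
by case sz: (s z); rewrite ?orbT // (candidate_set_closed xX exz sz).
Qed.

End CandidateSet.

Lemma card_subset_setU1_two_thirds (U : finType) (x : U) (A B : {set U}) :
  A \subset x |: B -> (x \in A -> 1 < #|B|)%N -> (2 * #|A| <= 3 * #|B|)%N.
Proof.
move=> AxB Bgt1.
have AB : A :\ x \subset B.
  apply/subsetP => y; rewrite !inE => /andP[yx /(subsetP AxB)].
  by rewrite !inE (negbTE yx).
have := subset_leq_card AB; rewrite (cardsD1 x A).
by case: (x \in A) Bgt1 => [/(_ isT) h1|_] /= h2; lia.
Qed.

Lemma two_thirds_le_ratio (a b : nat) :
  (0 < a)%N -> (2 * a <= 3 * b)%N -> 2 / 3 <= b%:R / a%:R :> rat.
Proof.
move=> apos le23; rewrite ler_pdivlMr ?ltr0n // mulrAC ler_pdivrMr //.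
by move: le23; rewrite -(ler_nat rat) !natrM; lra.
Qed.

Section WithdrawalStep.
Variables (T : finType) (e : rel T) (s : T -> bool) (X : {set T}).
Variable t : {set T * rule}.
Hypotheses (eirr : irreflexive e) (candX : candidate_set e s X).
Hypotheses (conX : induced_connected e X) (aliveX : alive e s X).
Hypothesis tWX : forall m, m \in t -> m.2 = Withdrawal /\ m.1 \in X.

Let vanishing (s' : T -> bool) := vanishes e s' X.
Let favourable (s' : T -> bool) :=
  vanishes e s' X && (beta e s' :\: beta e s != set0).

Let exec_tE (W : {set T}) :
  W \subset withdrawing_nodes t -> forall u, exec s t W u = (u \notin W) && s u.
Proof. by apply: exec_withdrawal => u; apply/negP => /tWX []. Qed.

Lemma vanishing_outcomes_favourable :
  outcomes s t vanishing \subset X |: outcomes s t favourable.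
Proof.
apply/subsetP => W; rewrite !inE /favourable /vanishing => /andP[sub van].
rewrite sub van /=; have [// | WX /=] := eqVneq W X.
have WX' : W \subset X.
  by apply: subset_trans sub _; apply/subsetP => u; rewrite inE => /tWX [].
have /properP[_ [x xX xW]] : W \proper X by rewrite properEneq WX.
apply/set0Pn; exists x.
exact: (survivor_in_new_beta candX (exec_tE sub) conX aliveX van xX xW).
Qed.

Lemma lone_survivor_favourable x :
  x \in X -> X \subset withdrawing_nodes t -> X :\ x \in outcomes s t favourable.
Proof.
move=> xX XTw; have sub : X :\ x \subset withdrawing_nodes t.
  exact: subset_trans (subsetDl X [set x]) XTw.
have van := lone_survivor_vanishes candX eirr (exec_tE sub) xX.
rewrite inE sub /favourable van; apply/set0Pn; exists x.
have xnotin : x \notin X :\ x by rewrite !inE eqxx.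
exact: (survivor_in_new_beta candX (exec_tE sub) conX aliveX van xX xnotin).
Qed.

Lemma favourable_outcomes_gt1 :
  X \subset withdrawing_nodes t -> (1 < #|outcomes s t favourable|)%N.
Proof.
move=> XTw; case/exists_inP: aliveX => u uX /andP[_ /existsP[v /andP[euv sv]]].
have vX := candidate_set_closed candX uX euv sv.
have uv : u != v by apply: contraTneq euv => ->; rewrite eirr.
have Xuv : X :\ u != X :\ v.
  apply/eqP => eqX; have : u \in X :\ v by rewrite !inE uv uX.
  by rewrite -eqX !inE eqxx.
apply: leq_trans (subset_leq_card (_ : [set X :\ u; X :\ v] \subset _)).
  by rewrite cards2 Xuv.
by apply/subsetP => W /set2P[] ->; apply: lone_survivor_favourable.
Qed.

End WithdrawalStep.

Theorem mainTheorem15 (T : finType) (e : rel T) (s : T -> bool)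
    (X : {set T}) (t : {set T * rule}) :
  simple_graph e ->
  connected_candidate_set e s X ->
  alive e s X ->
  valid_moves e s t ->
  (forall m, m \in t -> m.2 = Withdrawal /\ m.1 \in X) ->
  (0 < exec_prob s t (fun s' => vanishes e s' X))%R ->
  (2 / 3 <=
     exec_prob s t (fun s' => vanishes e s' X && (beta e s' :\: beta e s != set0))
     / exec_prob s t (fun s' => vanishes e s' X) :> rat)%R.
Proof.
move=> [_ eirr] /andP[candX conX] aliveX _ tWX.
rewrite exec_prob_gt0 => vanishing_gt0; rewrite exec_prob_ratioE.
apply: two_thirds_le_ratio => //; apply: (card_subset_setU1_two_thirds (x := X)).
  exact: vanishing_outcomes_favourable.
rewrite inE => /andP[XTw _]; exact: favourable_outcomes_gt1.
Qed.
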